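(* For any instance of MPMD or MBPMD, Greedy Dual eventually matches every request, i.e., it returns a feasible perfect matching of all $2m$ requests.
   Context: Problem (MPMD / MBPMD). Let $(\mathcal{X},\mathrm{dist})$ be a metric space. An instance consists of $2m$ requests $u_1,\dots,u_{2m}$. Each request $u$ is a triple $(\mathrm{pos}(u),\mathrm{atime}(u),\mathrm{sgn}(u))$, where $\mathrm{pos}(u)\in\mathcal{X}$ is its location and $\mathrm{atime}(u)\ge0$ is its arrival time, with arrival times nondecreasing. In MPMD, $\mathrm{sgn}(u)=0$ for all requests. In MBPMD, exactly $m$ requests have sign $+1$ and $m$ have sign $-1$. At time $\tau$, an algorithm may match two arrived, unmatched requests $u,v$ with $\mathrm{sgn}(u)=-\mathrm{sgn}(v)$, at cost $\mathrm{dist}(\mathrm{pos}(u),\mathrm{pos}(v))$ (connection cost) plus $(\tau-\mathrm{atime}(u))+(\tau-\mathrm{atime}(v))$ (waiting costs). All requests must eventually be matched. Notation. Edges are unordered pairs $\{u,v\}$ of distinct requests with $\mathrm{sgn}(u)=-\mathrm{sgn}(v)$. For a set $S$ of requests, $\delta(S)$ is the set of edges with exactly one endpoint in $S$. In MPMD, $\mathrm{sur}(S)=|S|\bmod 2$; in MBPMD, $\mathrm{sur}(S)=|\sum_{u\in S}\mathrm{sgn}(u)|$. For an edge $e=(u,v)$, $\mathrm{cost}(e)=\mathrm{dist}(\mathrm{pos}(u),\mathrm{pos}(v))+|\mathrm{atime}(u)-\mathrm{atime}(v)|$. Algorithm Greedy Dual (GD). GD maintains a dual variable $y_S\ge0$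 for every set $S$ of already-arrived requests; $y_S(\tau)$ denotes its value at time $\tau$. It also maintains a partition of the arrived requests into active sets, with $\mathcal{A}(u)$ denoting the active set containing $u$. An active set is growing if it contains at least one free request, and non-growing otherwise. - When a request $u$ arrives, $\mathcal{A}(u)\leftarrow\{u\}$ becomes a new active set, and $y_S\leftarrow 0$ for every new set $S$ containing $u$. - Tight-constraint event: while there is an edge $e=(u,v)$ between arrived requests with $\mathcal{A}(u)\neq\mathcal{A}(v)$ and $\sum_{S:\,e\in\delta(S)}y_S=\mathrm{cost}(e)$, GD does the following. It merges the two sets: $S=\mathcal{A}(u)\cup\mathcal{A}(v)$ becomes active and $\mathcal{A}(w)\leftarrow S$ for all $w\in S$, while $\mathcal{A}(u)$ and $\mathcal{A}(v)$ become inactive. It marks the edge $e$. Then, while there are free $u',v'\in S$ with $\mathrm{sgn}(u')=-\mathrm{sgn}(v')$, it matches $u'$ with $v'$ at the current time. - At all other times, $y_S$ increases continuously at rate $1$ (the same rate as time) for every active growing set $S$; all other dual variables stay constant. *)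

(* Greedy Dual (GD) for MPMD / MBPMD, modelled as an
   event-driven nondeterministic transition system. *)
From HB Require Import structures.
From mathcomp Require Import all_boot all_order all_algebra.
Set Implicit Arguments.
Unset Strict Implicit.
Unset Printing Implicit Defensive.
Import Order.TTheory GRing.Theory Num.Theory.
Local Open Scope ring_scope.

Definition is_metric (R : realFieldType) (X : Type) (dist : X -> X -> R) : Prop :=
  [/\ (forall x y, 0 <= dist x y),
      (forall x y, dist x y = 0 <-> x = y),
      (forall x y, dist x y = dist y x) &
      (forall x y z, dist x z <= dist x y + dist y z)].

Definition valid_times (R : realFieldType) (n : nat) (atime : 'I_n -> R) : Prop :=
  (forall i, 0 <= atime i) /\
  (forall i j : 'I_n, (i <= j)%N -> atime i <= atime j).

Definition MPMD_signs (n : nat) (sgn : 'I_n -> int) : Prop :=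
  forall i, sgn i = 0.

Definition MBPMD_signs (m : nat) (sgn : 'I_(m.*2) -> int) : Prop :=
  (forall i, sgn i = 1 \/ sgn i = -1) /\ #|[set i | sgn i == 1]| = m.

Section GD.
Context (R : realFieldType) (X : Type) (dist : X -> X -> R) (n : nat)
        (pos : 'I_n -> X) (atime : 'I_n -> R) (sgn : 'I_n -> int).
Local Notation I := 'I_n.

(* state of GD at the current time tau:
   arrived = set of arrived requests, y = dual variables,
   act u = active set A(u) containing u (meaningful for arrived u),
   mate u = Some v iff u is matched with v (None = u is free). *)
Record state := State {
  tau : R;
  arrived : {set I};
  y : {set I} -> R;
  act : I -> {set I};
  mate : I -> option I }.

Definition is_edge (u v : I) : bool := (u != v) && (sgn u == - sgn v).

Definition cost (u v : I) : R := dist (pos u) (pos v) + `|atime u - atime v|.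

Definition dual_load (yv : {set I} -> R) (u v : I) : R :=
  \sum_(S : {set I} | (u \in S) != (v \in S)) yv S.

Definition tight_cross (s : state) (yv : {set I} -> R) (u v : I) : Prop :=
  [/\ u \in arrived s, v \in arrived s, is_edge u v, act s u != act s v &
      dual_load yv u v = cost u v].

Inductive match_loop (S : {set I}) : (I -> option I) -> (I -> option I) -> Prop :=
| ml_done mt :
    (forall u v, u \in S -> v \in S -> mt u = None -> mt v = None -> ~~ is_edge u v) ->
    match_loop S mt mt
| ml_step mt mt' u v :
    u \in S -> v \in S -> mt u = None -> mt v = None -> is_edge u v ->
    match_loop S (fun w => if w == u then Some v else if w == v then Some u else mt w) mt' ->
    match_loop S mt mt'.

Definition active_growing (s : state) (S : {set I}) : bool :=
  [exists u in arrived s, act s u == S] && [exists w in S, mate s w == None].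

Definition grow_y (s : state) (d : R) : {set I} -> R :=
  fun S => if active_growing s S then y s S + d else y s S.

Inductive gd_step : state -> state -> Prop :=
| step_arrive s u :
    u \notin arrived s -> atime u = tau s ->
    (forall v : I, (v < u)%N -> v \in arrived s) ->
    gd_step s (State (tau s) (u |: arrived s)
                     (fun S => if u \in S then 0 else y s S)
                     (fun w => if w == u then [set u] else act s w)
                     (mate s))
| step_merge s u v mt' :
    tight_cross s (y s) u v ->
    match_loop (act s u :|: act s v) (mate s) mt' ->
    gd_step s (State (tau s) (arrived s) (y s)
                     (fun w => if w \in act s u :|: act s v
                               then act s u :|: act s v else act s w)
                     mt')
| step_grow s d :
    (forall v, v \notin arrived s -> tau s < atime v) ->
    (forall u v, ~ tight_cross s (y s) u v) ->
    0 < d ->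
    (forall v, v \notin arrived s -> tau s + d <= atime v) ->
    (forall u v, u \in arrived s -> v \in arrived s -> is_edge u v ->
       act s u != act s v -> dual_load (grow_y s d) u v <= cost u v) ->
    ((exists2 v, v \notin arrived s & tau s + d = atime v) \/
     (exists u v, tight_cross s (grow_y s d) u v)) ->
    gd_step s (State (tau s + d) (arrived s) (grow_y s d) (act s) (mate s)).

Definition gd_init : state :=
  State 0 set0 (fun _ => 0) (fun _ => set0) (fun _ => None).

Inductive gd_reachable : state -> Prop :=
| reach_init : gd_reachable gd_init
| reach_step s s' : gd_reachable s -> gd_step s s' -> gd_reachable s'.

Definition gd_infinite_run : Prop :=
  exists f : nat -> state, f 0%N = gd_init /\ forall k, gd_step (f k) (f k.+1).

Definition perfect_feasible (mt : I -> option I) : Prop :=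
  forall u, exists v, [/\ mt u = Some v, mt v = Some u & is_edge u v].

End GD.

(* Termination: the potential n.+1 * #(pending requests) + #(active sets) never
   increases and drops at every arrival and every merge. A growth step is only taken
   when no event is due and stops exactly when the next one becomes due, so it is never
   followed by another growth step.
   Completeness: when GD is stuck, no edge is tight and every request has arrived.
   Matched requests come in pairs, so there is an even number of them and their signs
   cancel; hence a free request u has a free neighbour w. The matching loop runs to
   exhaustion, so w lies outside the active set of u, which is therefore growing, and
   the duals could still grow until the next edge becomes tight. Such a growth step is
   legal because edges between distinct active sets are never overloaded; this survives
   arrivals since the duals around a request never exceed its waiting time. *)

From HB Require Import structures.
From mathcomp Require Import all_boot all_order all_algebra.
From mathcomp Require Import zify.
Set Implicit Arguments.
Unset Strict Implicit.
Unset Printing Implicit Defensive.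
Import Order.TTheory GRing.Theory Num.Theory.
Local Open Scope ring_scope.

Lemma no_descending_chain2 (p : nat -> nat) : ~ (forall k, p k.+2 < p k)%N.
Proof.
move=> desc; suff bound k : (p k.*2 + k <= p 0)%N.
  by move: (bound (p 0).+1); rewrite addnS ltnNge leq_addl.
elim: k => [|k IH]; first by rewrite addn0.
by move: (desc k.*2); rewrite doubleS; lia.
Qed.

Section Matchings.
Variables (n : nat) (sgn : 'I_n -> int).
Local Notation I := 'I_n.
Local Notation is_edge := (is_edge sgn).

Lemma edge_neq u v : is_edge u v -> u != v.
Proof. by case/andP. Qed.

Lemma edge_sym u v : is_edge u v -> is_edge v u.
Proof. by case/andP=> uv /eqP suv; rewrite /is_edge eq_sym uv suv opprK /=. Qed.

Definition matching (mt : I -> option I) : Prop :=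
  forall u v, mt u = Some v -> mt v = Some u /\ is_edge u v.

Definition match_pair (mt : I -> option I) (u v : I) : I -> option I :=
  fun w => if w == u then Some v else if w == v then Some u else mt w.

Lemma matching_match_pair mt u v : matching mt ->
  mt u = None -> mt v = None -> is_edge u v -> matching (match_pair mt u v).
Proof.
move=> mtM hu hv he a b; rewrite /match_pair.
have uv := edge_neq he.
case: (eqVneq a u) => [-> [<-] | _]; first by rewrite eqxx eq_sym (negbTE uv).
case: (eqVneq a v) => [-> [<-] | _]; first by rewrite eqxx; split=> //; apply: edge_sym.
move=> hab; have [hba eab] := mtM _ _ hab.
have bu : b != u by apply/eqP=> bu; rewrite bu hu in hba.
have bv : b != v by apply/eqP=> bv; rewrite bv hv in hba.
by rewrite (negbTE bu) (negbTE bv).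
Qed.

Lemma match_loop_matching S mt mt' :
  match_loop sgn S mt mt' -> matching mt -> matching mt'.
Proof.
elim=> // {}mt {}mt' u v _ _ hu hv he _ IH mtM.
exact/IH/matching_match_pair.
Qed.

Lemma match_loop_free S mt mt' w :
  match_loop sgn S mt mt' -> mt' w = None -> mt w = None.
Proof.
elim=> // {}mt {}mt' u v _ _ hu hv _ _ IH /IH.
by rewrite /match_pair; case: (eqVneq w u) => // _; case: (eqVneq w v).
Qed.

Lemma match_loop_maximal S mt mt' u v : match_loop sgn S mt mt' ->
  u \in S -> v \in S -> mt' u = None -> mt' v = None -> ~~ is_edge u v.
Proof. by elim=> // ? mtmax; apply: mtmax. Qed.

Lemma match_loop_exists S mt : exists mt', match_loop sgn S mt mt'.
Proof.
have [k] := ubnP #|[set w in S | mt w == None]|; elim: k mt => // k IH mt hk.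
case: (boolP [exists u, exists v,
   [&& u \in S, v \in S, mt u == None, mt v == None & is_edge u v]]); last first.
  move=> noedge; exists mt; apply: ml_done => u v uS vS hu hv; apply/negP => he.
  by move/existsP: noedge; apply; exists u; apply/existsP; exists v; rewrite uS vS hu hv he.
move=> /existsP [u /existsP [v /and5P [uS vS /eqP hu /eqP hv he]]].
have [mt' loop] : exists mt', match_loop sgn S (match_pair mt u v) mt'.
  apply: IH; rewrite -ltnS; apply: (leq_trans _ hk); apply: proper_card.
  apply/properP; split.
    apply/subsetP => w; rewrite !inE /match_pair => /andP [-> /=].
    by case: (eqVneq w u) => //; case: (eqVneq w v).
  by exists u; rewrite !inE ?uS ?hu //= /match_pair eqxx.
by exists mt'; apply: ml_step loop.
Qed.

Section MatchedRequests.
Variable mt : I -> option I.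
Hypothesis mtM : matching mt.

Let partner u := odflt u (mt u).

Lemma partnerK : involutive partner.
Proof.
move=> u; rewrite /partner; case E: (mt u) => [v|] /=; last by rewrite E.
by have [-> _] := mtM E.
Qed.

Lemma partner_matched u : (mt (partner u) != None) = (mt u != None).
Proof.
rewrite /partner; case E: (mt u) => [v|] /=; last by rewrite E.
by have [-> _] := mtM E.
Qed.

Lemma partner_edge u : mt u != None -> is_edge u (partner u).
Proof. by rewrite /partner; case E: (mt u) => [v|] //= _; have [_ ->] := mtM E. Qed.

Lemma matched_sgn_sum : \sum_(u | mt u != None) sgn u = 0.
Proof.
have opp : \sum_(u | mt u != None) sgn u = - \sum_(u | mt u != None) sgn u.
  rewrite {1}(reindex_inj (inv_inj partnerK)) /= -sumrN.
  apply: eq_big => [u | u m]; first by rewrite partner_matched.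
  rewrite partner_matched in m.
  by case/andP: (partner_edge m) => _ /eqP ->; rewrite opprK.
by move/eqP: opp; rewrite -addr_eq0 -mulr2n mulrn_eq0 => /eqP.
Qed.

Lemma matched_card_even : ~~ odd #|[set u | mt u != None]|.
Proof.
pose L := [set u | (mt u != None) && (val u < val (partner u))%N].
have -> : [set u | mt u != None] = L :|: partner @: L.
  apply/setP => u; rewrite (can2_imset_pre _ partnerK partnerK) !inE.
  rewrite partner_matched partnerK -andb_orr.
  case m: (mt u != None) => //=.
  by have := edge_neq (partner_edge m); rewrite -val_eqE; case: ltngtP.
rewrite cardsU card_imset; last exact: inv_inj partnerK.
suff -> : L :&: partner @: L = set0 by rewrite cards0 subn0 addnn odd_double.
apply/setP => u; rewrite (can2_imset_pre _ partnerK partnerK) !inE partnerK.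
by apply/negP => /andP [/andP [_ lt1] /andP [_ /(ltn_trans lt1)]]; rewrite ltnn.
Qed.

Lemma free_partner_sgn0 w : (forall u, sgn u = 0) -> ~~ odd n -> mt w = None ->
  exists w', mt w' = None /\ is_edge w w'.
Proof.
move=> sgn0 n_even hw.
have [w' /andP [/eqP hw' w'w] | only_w] := pickP (fun w' => (mt w' == None) && (w' != w)).
  by exists w'; rewrite /is_edge eq_sym w'w !sgn0 oppr0 eqxx.
have free_w : ~: [set u | mt u != None] = [set w].
  apply/setP => u; rewrite !inE negbK; apply/idP/eqP => [hu | ->]; last by rewrite hw.
  by apply/eqP; move: (only_w u); rewrite hu /= => /negbFE.
move: (cardsC [set u | mt u != None]); rewrite free_w cards1 card_ord => card_n.
suff : odd n by rewrite (negbTE n_even).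
by rewrite -card_n addn1 /= matched_card_even.
Qed.

Lemma free_partner_sgn_pm1 w : (forall u, sgn u = 1 \/ sgn u = -1) ->
  \sum_u sgn u = 0 -> mt w = None -> exists w', mt w' = None /\ is_edge w w'.
Proof.
move=> pm1 sum0 hw.
have free_sum : \sum_(u | mt u == None) sgn u = 0.
  by move: sum0; rewrite (bigID (fun u => mt u == None)) /= matched_sgn_sum addr0.
have [w' /andP [/eqP hw' /eqP opp] | no_opp] :=
  pickP (fun w' => (mt w' == None) && (sgn w' == - sgn w)).
  exists w'; split=> //; rewrite /is_edge opp opprK eqxx andbT.
  by apply: contra_eq_neq opp => <-; case: (pm1 w) => ->.
have : \sum_(u | mt u == None) sgn u = sgn w *+ #|[set u | mt u == None]|.
  rewrite -sumr_const; apply: eq_big => [u | u hu]; first by rewrite inE.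
  by move: (no_opp u); rewrite hu /=; case: (pm1 u) => ->; case: (pm1 w) => ->.
rewrite free_sum => /esym/eqP; rewrite mulrn_eq0 cards_eq0.
have sgn_w0 : sgn w != 0 by case: (pm1 w) => ->.
rewrite (negbTE sgn_w0) orbF => /eqP/setP/(_ w).
by rewrite !inE hw.
Qed.

End MatchedRequests.
End Matchings.

Lemma MBPMD_sgn_sum m (sgn : 'I_(m.*2) -> int) : MBPMD_signs sgn -> \sum_i sgn i = 0.
Proof.
move=> [pm1 card_plus]; set P := [set i | sgn i == 1] in card_plus.
have card_minus : #|~: P| = m.
  by apply: (@addnI m); rewrite -{1}card_plus cardsC card_ord addnn.
rewrite (bigID (mem P)) /= [X in _ + X](eq_bigl (fun i => i \in ~: P)) => [|i]; last by rewrite in_setC.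
rewrite (eq_bigr (fun=> 1)) => [|i]; last by rewrite inE => /eqP.
rewrite [X in _ + X](eq_bigr (fun=> -1)) => [|i]; last by rewrite !inE; case: (pm1 i) => ->.
by rewrite !sumr_const card_plus card_minus mulNrn subrr.
Qed.

Section GreedyDual.
Variables (R : realFieldType) (X : Type) (dist : X -> X -> R) (n : nat)
  (pos : 'I_n -> X) (atime : 'I_n -> R) (sgn : 'I_n -> int).
Hypothesis dist_ge0 : forall x y, 0 <= dist x y.
Hypothesis atime_ge0 : forall i, 0 <= atime i.
Hypothesis atime_mono : forall i j : 'I_n, (i <= j)%N -> atime i <= atime j.
Local Notation I := 'I_n.
Local Notation state := (state R n).
Local Notation gd_step := (gd_step dist pos atime sgn).
Local Notation tight_cross := (tight_cross dist pos atime sgn).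
Local Notation is_edge := (is_edge sgn).
Local Notation cost := (cost dist pos atime).

Lemma dual_loadC (yv : {set I} -> R) u v : dual_load yv u v = dual_load yv v u.
Proof. by apply: eq_bigl => S; rewrite eq_sym. Qed.

Lemma atime_dist_le_cost u v : `|atime u - atime v| <= cost u v.
Proof. by rewrite lerDr. Qed.

Record gd_inv (s : state) : Prop := GdInv {
  act_self : forall w, w \in arrived s -> w \in act s w;
  act_eq : forall w z, w \in arrived s -> z \in arrived s ->
    z \in act s w -> act s z = act s w;
  act_sub : forall w, w \in arrived s -> act s w \subset arrived s;
  tau_le_atime : forall v, v \notin arrived s -> tau s <= atime v;
  load_le_cost : forall u v, u \in arrived s -> v \in arrived s -> is_edge u v ->
    act s u != act s v -> dual_load (y s) u v <= cost u v;
  (* keeps the edges of a newly arrived request from being overloaded *)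
  duals_le_wait : forall v, v \in arrived s ->
    \sum_(S : {set I} | v \in S) y s S <= tau s - atime v;
  duals_ge0 : forall S, 0 <= y s S;
  mate_matching : matching sgn (mate s);
  free_maximal : forall w z, w \in arrived s -> z \in arrived s -> act s w = act s z ->
    mate s w = None -> mate s z = None -> ~~ is_edge w z }.

Lemma gd_inv_init : gd_inv (gd_init R n).
Proof. by split=> //= [u v|v|w z]; rewrite inE. Qed.

Lemma mem_act s w z : gd_inv s -> w \in arrived s -> z \in arrived s ->
  (z \in act s w) = (act s z == act s w).
Proof.
move=> sI wa za; apply/idP/eqP => [|<-]; first exact: act_eq.
exact: act_self.
Qed.

Lemma gd_inv_merge s u v mt' : gd_inv s -> tight_cross s (y s) u v ->
  match_loop sgn (act s u :|: act s v) (mate s) mt' ->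
  gd_inv (State (tau s) (arrived s) (y s)
    (fun w => if w \in act s u :|: act s v then act s u :|: act s v else act s w) mt').
Proof.
move=> sI [ua va _ _ _] loop; set S := act s u :|: act s v.
have S_arrived : S \subset arrived s by rewrite subUset !(act_sub sI).
have act_S w : w \in S -> act s w \subset S.
  move=> wS; have wa := subsetP S_arrived _ wS.
  by move: wS; rewrite inE => /orP [] wx;
    rewrite ?(act_eq sI ua wa wx) ?(act_eq sI va wa wx) ?subsetUl ?subsetUr.
have act_in_S w z : w \in S -> z \in arrived s -> act s z = act s w -> z \in S.
  by move=> wS za zw; apply: (subsetP (act_S _ wS)); rewrite -zw act_self.
split=> /=.
- by move=> w wa; case: ifP => // _; apply: act_self.
- move=> w z wa za; case: ifP => wS; case: ifP => zS // zw.
  + by move: wS; rewrite (act_in_S z w zS wa (esym (act_eq sI wa za zw))).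
  + exact: act_eq.
- by move=> w wa; case: ifP => // _; apply: act_sub.
- exact: tau_le_atime.
- move=> a b aa ba ab; case: ifP => aS; case: ifP => bS; rewrite ?eqxx // => neq.
  + apply: (load_le_cost sI) => //.
    by apply: contraFneq bS => e; apply: act_in_S aS ba (esym e).
  + apply: (load_le_cost sI) => //.
    by apply: contraFneq aS => e; apply: act_in_S bS aa e.
  + exact: (load_le_cost sI).
- exact: duals_le_wait.
- exact: duals_ge0.
- exact: match_loop_matching loop (mate_matching sI).
- move=> w z wa za; case: ifP => wS; case: ifP => zS.
  + by move=> _; apply: match_loop_maximal loop wS zS.
  + by move=> e; move: (act_self sI za); rewrite -e zS.
  + by move=> e; move: (act_self sI wa); rewrite e wS.
  + move=> e /(match_loop_free loop) wf /(match_loop_free loop) zf.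
    exact: (free_maximal sI wa za e wf zf).
Qed.

Lemma dual_load_reset_le (yv : {set I} -> R) u z : (forall S, 0 <= yv S) ->
  dual_load (fun S => if u \in S then 0 else yv S) u z <= \sum_(S : {set I} | z \in S) yv S.
Proof.
move=> yv_ge0; rewrite /dual_load big_mkcond [leRHS]big_mkcond /=.
by apply: ler_sum => S _; case: (u \in S); case: (z \in S).
Qed.

Lemma gd_inv_arrive s u : gd_inv s -> u \notin arrived s -> atime u = tau s ->
  gd_inv (State (tau s) (u |: arrived s) (fun S => if u \in S then 0 else y s S)
    (fun w => if w == u then [set u] else act s w) (mate s)).
Proof.
move=> sI un au; set y' := fun S : {set I} => if u \in S then 0 else y s S.
have y'_le S : y' S <= y s S by rewrite /y'; case: ifP => // _; apply: duals_ge0.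
have act_u w : w \in arrived s -> u \notin act s w.
  by move=> wa; apply: contra un; apply/subsetP/(act_sub sI).
have new_load z : z \in arrived s ->
    dual_load y' u z <= cost u z /\ dual_load y' z u <= cost z u.
  move=> za; rewrite [dual_load y' z u]dual_loadC.
  have load_le := le_trans (dual_load_reset_le u z (duals_ge0 sI)) (duals_le_wait sI za).
  rewrite -au in load_le; split; apply: (le_trans load_le).
    exact: le_trans (ler_norm _) (atime_dist_le_cost _ _).
  by apply: le_trans (ler_norm _) _; rewrite distrC; apply: atime_dist_le_cost.
split=> /=.
- by move=> w; rewrite in_setU1; case: eqVneq => [-> _ | _ /= wa];
    [apply: set11 | apply: act_self].
- move=> w z; rewrite !in_setU1.
  case: (eqVneq w u) => [-> _ _ /set1P -> | wu /= wa]; first by rewrite eqxx.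
  case: (eqVneq z u) => [-> _ | zu /= za]; last exact: act_eq.
  by move/negP: (act_u w wa).
- move=> w; rewrite in_setU1; case: eqVneq => [-> _ | _ /= wa].
    by rewrite sub1set setU11.
  exact: subset_trans (act_sub sI wa) (subsetUr _ _).
- by move=> v; rewrite in_setU1 negb_or => /andP [_]; apply: tau_le_atime.
- move=> a b; rewrite !in_setU1.
  case: (eqVneq a u) => [-> _ | au' /= aa]; case: (eqVneq b u) => [-> _ | bu /= ba] //.
  + by rewrite /is_edge eqxx.
  + by move=> _ _; case: (new_load b ba).
  + by move=> _ _; case: (new_load a aa).
  + move=> ab neq; apply: le_trans (load_le_cost sI aa ba ab neq).
    by apply: ler_sum => S _; apply: y'_le.
- move=> v; rewrite in_setU1; case: (eqVneq v u) => [-> _ | vu /= va].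
    by rewrite big1 ?au ?subrr // => S uS; rewrite /y' uS.
  by apply: le_trans (duals_le_wait sI va); apply: ler_sum => S _; apply: y'_le.
- by move=> S; rewrite /y'; case: ifP => // _; apply: duals_ge0.
- exact: mate_matching.
- move=> w z; rewrite !in_setU1.
  case: (eqVneq w u) => [-> _ | wu /= wa]; case: (eqVneq z u) => [-> _ | zu /= za].
  + by rewrite /is_edge eqxx.
  + by move=> e; move: (act_self sI za); rewrite -e => /set1P zu'; rewrite zu' eqxx in zu.
  + by move=> e; move: (act_self sI wa); rewrite e => /set1P wu'; rewrite wu' eqxx in wu.
  + exact: free_maximal.
Qed.

Lemma grow_yE (s : state) d S :
  grow_y s d S = y s S + (if active_growing s S then d else 0).
Proof. by rewrite /grow_y; case: ifP; rewrite ?addr0. Qed.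

Lemma active_growing_act s v (S : {set I}) : gd_inv s -> v \in arrived s -> v \in S ->
  active_growing s S -> S = act s v.
Proof.
move=> sI va vS /andP [/existsP [w /andP [wa /eqP wS]] _].
by rewrite -wS in vS *; rewrite (act_eq sI wa va vS).
Qed.

Lemma growth_through_le s v (d : R) : gd_inv s -> v \in arrived s -> 0 <= d ->
  \sum_(S : {set I} | v \in S) (if active_growing s S then d else 0) <= d.
Proof.
move=> sI va d_ge0.
rewrite -[leRHS](_ : \sum_(S : {set I} | S == act s v) d = d); last exact: big_pred1_eq.
rewrite big_mkcond [leRHS]big_mkcond.
apply: ler_sum => S _; case: ifP => vS; case: ifP => ag //=; last by case: ifP.
by rewrite (active_growing_act sI va vS ag) eqxx.
Qed.

Lemma gd_inv_grow s d : gd_inv s -> 0 <= d ->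
  (forall v, v \notin arrived s -> tau s + d <= atime v) ->
  (forall u v, u \in arrived s -> v \in arrived s -> is_edge u v ->
     act s u != act s v -> dual_load (grow_y s d) u v <= cost u v) ->
  gd_inv (State (tau s + d) (arrived s) (grow_y s d) (act s) (mate s)).
Proof.
move=> sI d_ge0 before_arrival loads_le; split=> //=.
- exact: act_self sI.
- exact: act_eq sI.
- exact: act_sub sI.
- move=> v va; under eq_bigr do rewrite grow_yE.
  by rewrite big_split /= addrAC lerD ?(duals_le_wait sI) ?growth_through_le.
- by move=> S; rewrite grow_yE addr_ge0 ?(duals_ge0 sI) //; case: ifP.
- exact: mate_matching sI.
- exact: free_maximal sI.
Qed.

Lemma gd_inv_step s s' : gd_inv s -> gd_step s s' -> gd_inv s'.
Proof.
move=> sI st; case: st sI => [t u un au _ | t u v mt' tc loop | t d _ _ d_gt0 arr loads _] tI.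
- exact: gd_inv_arrive.
- exact: gd_inv_merge.
- exact: gd_inv_grow (ltW d_gt0) arr loads.
Qed.

Lemma gd_inv_reachable s : gd_reachable dist pos atime sgn s -> gd_inv s.
Proof. by elim=> [|t t' _ tI /(gd_inv_step tI)]; first exact: gd_inv_init. Qed.

Definition active_sets (s : state) : {set {set I}} := [set act s w | w in arrived s].

(* A pending request outweighs all active sets together, so an arrival lowers the
   potential although it creates an active set. *)
Definition potential (s : state) : nat :=
  (n.+1 * #|~: arrived s| + #|active_sets s|)%N.

Definition event_due (s : state) : Prop :=
  (exists2 v, v \notin arrived s & tau s = atime v) \/
  exists u v, tight_cross s (y s) u v.

Lemma card_active_sets_le s : (#|active_sets s| <= n)%N.
Proof.
by apply: leq_trans (leq_imset_card _ _) _; have := max_card (arrived s); rewrite card_ord.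
Qed.

Lemma card_active_sets_merge s u v : gd_inv s -> tight_cross s (y s) u v ->
  (#|[set (if w \in act s u :|: act s v then act s u :|: act s v else act s w)
        | w in arrived s]| < #|active_sets s|)%N.
Proof.
move=> sI [ua va _ uv _]; set S := act s u :|: act s v.
have sub : [set (if w \in S then S else act s w) | w in arrived s]
    \subset S |: (active_sets s :\: [set act s u; act s v]).
  apply/subsetP => _ /imsetP [w wa ->]; rewrite !inE.
  case: ifP => wS; first by rewrite eqxx.
  rewrite /active_sets imset_f // andbT; apply/orP; right.
  apply/norP; split; apply: contraFneq wS => e;
    by rewrite -e (act_self sI wa) ?orbT.
have uv_sets : [set act s u; act s v] \subset active_sets s.
  by apply/subsetP => _ /set2P [] ->; apply: imset_f.
apply: leq_ltn_trans (subset_leq_card sub) _.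
apply: leq_ltn_trans (leq_card_setU _ _) _.
move: (subset_leq_card uv_sets).
rewrite cards1 cardsD (setIidPr uv_sets) cards2 uv /=.
by set k := #|active_sets s|; lia.
Qed.

Lemma gd_step_potential s s' : gd_inv s -> gd_step s s' ->
  (potential s' < potential s)%N \/
  [/\ potential s' = potential s, ~ event_due s & event_due s'].
Proof.
move=> sI st; case: st sI => [t u un au _ | t u v mt' tc loop | t d waiting no_tight _ _ _ due] tI.
- left; rewrite /potential /=.
  have pending : #|~: arrived t| = #|~: (u |: arrived t)|.+1.
    rewrite (cardsD1 u) in_setC un add1n; congr _.+1.
    by apply: eq_card => w; rewrite !inE negb_or andbC.
  rewrite pending mulnS [(n.+1 + _)%N]addnC -addnA ltn_add2l ltn_addr // ltnS.
  exact: card_active_sets_le.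
- by left; rewrite /potential ltn_add2l; apply: card_active_sets_merge.
- right; split=> // [[[v vn tv] | [a [b tc]]]]; last exact: no_tight tc.
  by move: (waiting v vn); rewrite tv ltxx.
Qed.

Lemma gd_steps_potential_lt s s' s'' : gd_inv s -> gd_step s s' -> gd_step s' s'' ->
  (potential s'' < potential s)%N.
Proof.
move=> sI st st'; have s'I := gd_inv_step sI st.
case: (gd_step_potential s'I st') => [lt' | [-> not_due _]].
  case: (gd_step_potential sI st) => [lt | [<- _ _]] //.
  exact: ltn_trans lt' lt.
by case: (gd_step_potential sI st) => [// | [_ _ /not_due]].
Qed.

Lemma gd_run_finite : ~ gd_infinite_run dist pos atime sgn.
Proof.
move=> [f [f0 fS]].
have fI k : gd_inv (f k).
  by elim: k => [|k IH]; [rewrite f0; apply: gd_inv_init | apply: gd_inv_step (fS k)].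
apply: (@no_descending_chain2 (fun k => potential (f k))) => k.
exact: gd_steps_potential_lt (fI k) (fS k) (fS k.+1).
Qed.

Definition cross_edge (s : state) (u v : I) : bool :=
  [&& u \in arrived s, v \in arrived s, is_edge u v & act s u != act s v].

Definition growing_cut (s : state) (u v : I) : nat :=
  #|[set S : {set I} | ((u \in S) != (v \in S)) && active_growing s S]|.

Lemma dual_load_grow s d u v :
  dual_load (grow_y s d) u v = dual_load (y s) u v + d *+ growing_cut s u v.
Proof.
rewrite /dual_load; under eq_bigr do rewrite grow_yE.
rewrite big_split /= -big_mkcondr -sumr_const; congr (_ + _).
by apply: eq_bigl => S; rewrite inE.
Qed.

(* Time may advance until the next arrival, or until an edge leaving some growing
   set becomes tight; the latter happens after its slack divided by the number of
   growing sets it leaves. *)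
Definition growth_candidate (s : state) (c : I + I * I) : bool :=
  match c with
  | inl v => v \notin arrived s
  | inr (u, v) => cross_edge s u v && (0 < growing_cut s u v)%N
  end.

Definition growth_limit (s : state) (c : I + I * I) : R :=
  match c with
  | inl v => atime v - tau s
  | inr (u, v) => (cost u v - dual_load (y s) u v) / (growing_cut s u v)%:R
  end.

Section Growth.
Variable s : state.
Hypothesis sI : gd_inv s.
Hypothesis waiting : forall v, v \notin arrived s -> tau s < atime v.
Hypothesis no_tight : forall u v, ~ tight_cross s (y s) u v.

Lemma growth_limit_gt0 c : growth_candidate s c -> 0 < growth_limit s c.
Proof.
case: c => [v /waiting | [u v] /andP [/and4P [ua va uv neq] k_gt0]] /=.
  by rewrite subr_gt0.
rewrite divr_gt0 ?ltr0n // subr_gt0 lt_neqAle (load_le_cost sI) // andbT.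
by apply/eqP => tight; apply: (no_tight (u := u) (v := v)).
Qed.

Lemma gd_grow_enabled c0 : growth_candidate s c0 -> exists s', gd_step s s'.
Proof.
move=> cand0; case: (arg_minP (growth_limit s) cand0) => c cand c_min.
set d := growth_limit s c.
have d_gt0 : 0 < d := growth_limit_gt0 cand.
exists (State (tau s + d) (arrived s) (grow_y s d) (act s) (mate s)).
apply: step_grow => //.
- by move=> v vn; rewrite -lerBrDl; apply: (c_min (inl v)).
- move=> a b aa ba ab neq; rewrite dual_load_grow.
  have [k0 | k_gt0] := posnP (growing_cut s a b).
    by rewrite k0 mulr0n addr0 (load_le_cost sI).
  have cand_ab : growth_candidate s (inr (a, b)).
    by rewrite /= /cross_edge aa ba ab neq k_gt0.
  by move: (c_min _ cand_ab); rewrite /= ler_pdivlMr ?ltr0n // mulr_natr lerBrDl addrC.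
- rewrite /d; case: c cand {d c_min d_gt0} => [v vn | [a b] /andP [/and4P [aa ba ab neq] k_gt0]] /=.
    by left; exists v => //; rewrite addrC subrK.
  right; exists a, b; split=> //; rewrite dual_load_grow -[X in _ + X]mulr_natr mulfVK.
    by rewrite addrC subrK.
  by rewrite pnatr_eq0 -lt0n.
Qed.

End Growth.

Definition gd_stuck (s : state) : Prop := forall s', ~ gd_step s s'.

Lemma stuck_no_tight s : gd_stuck s -> forall u v, ~ tight_cross s (y s) u v.
Proof.
move=> stuck u v tc; have [mt' loop] := match_loop_exists sgn (act s u :|: act s v) (mate s).
exact: stuck _ (step_merge tc loop).
Qed.

Lemma stuck_waiting s : gd_inv s -> gd_stuck s ->
  forall v, v \notin arrived s -> tau s < atime v.
Proof.
move=> sI stuck v vn; rewrite ltNge; apply/negP => late.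
case: (arg_minnP (P := [pred w | w \notin arrived s]) (val : I -> nat) vn) => u un u_min.
apply: (stuck _ (step_arrive dist pos sgn un _ _)).
  apply: le_anti; rewrite (tau_le_atime sI un) andbT.
  by apply: le_trans late; apply/atime_mono/u_min.
by move=> w wu; apply: contraTT wu => /u_min; rewrite leqNgt.
Qed.

Lemma stuck_all_arrived s : gd_inv s -> gd_stuck s -> forall v, v \in arrived s.
Proof.
move=> sI stuck v; apply/negPn/negP => vn.
have [s' st] := gd_grow_enabled sI (stuck_waiting sI stuck) (stuck_no_tight stuck)
  (c0 := inl v) vn.
exact: stuck _ st.
Qed.

Lemma stuck_perfect s :
  (forall mt, matching sgn mt -> forall w, mt w = None ->
     exists w', mt w' = None /\ is_edge w w') ->
  gd_inv s -> gd_stuck s -> perfect_feasible sgn (mate s).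
Proof.
move=> partners sI stuck u; have arr := stuck_all_arrived sI stuck.
case hu: (mate s u) => [v|]; first by have [] := mate_matching sI hu; exists v.
have [w [hw uw]] := partners _ (mate_matching sI) u hu.
have neq : act s u != act s w.
  by apply: contraTneq uw => e; apply: (free_maximal sI (arr u) (arr w) e hu hw).
suff [s' st] : exists s', gd_step s s' by case: (stuck s' st).
apply: (gd_grow_enabled sI (stuck_waiting sI stuck) (stuck_no_tight stuck) (c0 := inr (u, w))).
rewrite /= /cross_edge !arr uw neq /=; apply/card_gt0P; exists (act s u).
rewrite inE (act_self sI (arr u)) (mem_act sI (arr u) (arr w)) [act s w == _]eq_sym.
rewrite (negbTE neq) /=; apply/andP; split; apply/existsP; exists u.
  by rewrite arr eqxx.
by rewrite (act_self sI (arr u)) hu eqxx.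
Qed.

End GreedyDual.

Theorem lemma4 (R : realFieldType) (X : Type) (dist : X -> X -> R) (m : nat)
    (pos : 'I_(m.*2) -> X) (atime : 'I_(m.*2) -> R) (sgn : 'I_(m.*2) -> int) :
  is_metric dist ->
  valid_times atime ->
  (MPMD_signs sgn \/ MBPMD_signs sgn) ->
  ~ gd_infinite_run dist pos atime sgn /\
  (forall s, gd_reachable dist pos atime sgn s ->
     (forall s', ~ gd_step dist pos atime sgn s s') ->
     perfect_feasible sgn (mate s)).
Proof.
move=> [dist_ge0 _ _ _] [atime_ge0 atime_mono] signs; split.
  exact: gd_run_finite dist_ge0 atime_ge0.
move=> s reach stuck.
apply: (stuck_perfect atime_mono _ (gd_inv_reachable dist_ge0 atime_ge0 reach) stuck).
move=> mt mtM w hw; case: signs => [sgn0 | signs].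
  by apply: free_partner_sgn0 => //; rewrite odd_double.
exact: (free_partner_sgn_pm1 mtM (proj1 signs) (MBPMD_sgn_sum signs) hw).
Qed.
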